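(* For the redundancy-$d$ cancel-on-completion model described in the context, provided the normalising sum is finite, the stationary distribution of the token state descriptor is $$\pi((T_1,n_1,\dots,T_i,n_i))=\pi((0))\frac1{i!}\prod_{j=1}^i\Big(\frac{j\lambda}{\mu\binom Kd F_j(T_1,\dots,T_j)}\Big)^{n_j+1},$$ for all $i\in\{0,\dots,\binom Kd\}$, distinct $T_1,\dots,T_i$ and $n_j\in\mathbb N_0$.
   Context: Redundancy-$d$ COC model: $K$ homogeneous servers, each with its own FCFS queue, serving at exponential rate $\mu$. Customers arrive as a Poisson process with rate $\lambda$; each picks a uniformly random set of $d$ of the $K$ servers and sends a copy to each, copies having independent exponential($\mu$) service requirements; when any copy completes, all copies of that customer are removed. Customer types correspond to the $\binom Kd$ server subsets, each with arrival rate $\lambda/\binom Kd$. Token representation: one token per type, held by the oldest customer of that type present. State: $(0)$ or $(T_1,n_1,\dots,T_i,n_i)$ with $T_1,\dots,T_i$ distinct held tokens ordered by arrival of their holders and $n_j$ the number of non-holding customers arriving between holders of $T_j$ and $T_{j+1}$ (after the holder of $T_i$ for $j=i$). $F_j(T_1,\dots,T_j)$ denotes the number of servers in the union of the server sets of the types corresponding to $T_1,\dots,T_j$. *)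

From HB Require Import structures.
From mathcomp Require Import all_boot.
From Stdlib Require Import Reals.
Set Implicit Arguments. Unset Strict Implicit. Unset Printing Implicit Defensive.

Definition ctype (K d : nat) : finType := {S : {set 'I_K} | #|S| == d}.

Definition rsum {T : Type} (s : seq T) (f : T -> R) : R :=
  foldr (fun x acc => (f x + acc)%R) 0%R s.
Definition rprod {T : Type} (s : seq T) (f : T -> R) : R :=
  foldr (fun x acc => (f x * acc)%R) 1%R s.

Definition servers K d (s : seq (ctype K d)) : {set 'I_K} :=
  \bigcup_(c <- s) val c.

(* ---------- detailed (per-customer) COC chain ----------
   State: list of the types of the customers present, oldest first.
   A customer of type c preceded by the customers [pre] is served
   (FCFS at each server) by the servers of c not used by older
   customers, hence completes at rate mu * #|c \ servers pre|. *)
Definition dep_rate K d (mu : R) (pre : seq (ctype K d)) (c : ctype K d) : R :=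
  (mu * INR #|val c :\: servers pre|)%R.

Fixpoint dep_total_aux K d (mu : R) (pre x : seq (ctype K d)) : R :=
  match x with
  | [::] => 0%R
  | c :: x' => (dep_rate mu pre c + dep_total_aux mu (rcons pre c) x')%R
  end.

Definition out_rate K d (lam mu : R) (x : seq (ctype K d)) : R :=
  (lam + dep_total_aux mu [::] x)%R.

(* total inflow into state x under the measure p:
   an arrival of the last customer of x (rate lam / C(K,d) per type),
   or the completion of a customer of type c at position k. *)
Definition in_rate K d (lam mu : R) (p : seq (ctype K d) -> R)
    (x : seq (ctype K d)) : R :=
  ((match rev x with
    | [::] => 0
    | c :: ry => p (rev ry) * (lam / INR 'C(K, d))
    end)
   + rsum (iota 0 (size x).+1) (fun k =>
       rsum (enum (ctype K d)) (fun c =>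
         p (take k x ++ c :: drop k x) * dep_rate mu (take k x) c)))%R.

Definition mass K d (p : seq (ctype K d) -> R) (n : nat) : R :=
  rsum (enum ((n.-tuple (ctype K d)) : finType)) (fun t => p (val t)).

Definition stationary K d (lam mu : R) (p : seq (ctype K d) -> R) : Prop :=
  (forall x, (0 <= p x)%R) /\
  infinite_sum (mass p) 1%R /\
  (forall x, (p x * out_rate lam mu x)%R = in_rate lam mu p x).

(* ---------- token state descriptor ----------
   Token state (T_1,n_1,...,T_i,n_i) is the list [:: (T_1,n_1); ...];
   the empty list is the state (0). *)
Fixpoint incr_last (T : Type) (x : seq (T * nat)) : seq (T * nat) :=
  match x with
  | [::] => [::]
  | (c, n) :: x' =>
      match x' with
      | [::] => [:: (c, n.+1)]
      | _ => (c, n) :: incr_last x'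
      end
  end.

Definition desc_step K d (acc : seq (ctype K d * nat)) (c : ctype K d) :=
  if c \in map fst acc then incr_last acc else rcons acc (c, 0).

Definition desc K d (s : seq (ctype K d)) : seq (ctype K d * nat) :=
  foldl (@desc_step K d) [::] s.

Definition pi_tok K d (p : seq (ctype K d) -> R) (x : seq (ctype K d * nat)) : R :=
  let n := (size x + sumn (map snd x))%N in
  rsum (enum ((n.-tuple (ctype K d)) : finType))
    (fun t => if desc (val t) == x then p (val t) else 0%R).

Definition Fj K d (x : seq (ctype K d * nat)) (j : nat) : nat :=
  #|servers (take j (map fst x))|.

Definition tok_weight K d (lam mu : R) (x : seq (ctype K d * nat)) : R :=
  (/ INR (size x)`! *
   rprod (iota 1 (size x)) (fun j =>
     (INR j * lam / (mu * INR 'C(K, d) * INR (Fj x j)))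
       ^ (S (nth O (map snd x) (Nat.pred j))))%R).

Definition norm_finite K d (lam mu : R) : Prop :=
  exists M : R, forall l : seq (seq (ctype K d * nat)),
    uniq l -> all (fun x => uniq (map fst x)) l ->
    (rsum l (tok_weight lam mu) <= M)%R.

From HB Require Import structures.
From mathcomp Require Import all_boot.
From Stdlib Require Import Reals Lra Lia.
From mathcomp Require Import zify.

(* The proof works on the detailed chain whose states are the words of
   customer types, oldest first.  Writing a = lam / (mu C(K,d)), the
   product form  q(c_1 ... c_n) = prod_k a / |servers(c_1 ... c_k)|
   satisfies the global balance equations: the inflow by departures into a
   word x telescopes (lemma [insert_outflow_eq]) to exactly what is needed.
   Summing q over the words with a given token descriptor gives the token
   weight of the statement (lemma [aggregation]), so the hypothesis that the
   token weights have a finite sum makes q normalisable; this gives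
   existence.  For uniqueness, if p is stationary then g = |p - p([]) q| is
   a nonnegative sub-solution of the balance equations whose level masses
   tend to 0 and with g([]) = 0; comparing the flux between consecutive
   levels forces every balance inequality to be tight, and then g = 0 by
   induction on the word (lemma [subsolution_eq0]).  The theorem follows by
   summing p = p([]) q over the words with a given descriptor. *)

Set Implicit Arguments. Unset Strict Implicit. Unset Printing Implicit Defensive.

HB.instance Definition _ := Monoid.isComLaw.Build R 0%R Rplus
  (fun a b c => esym (Rplus_assoc a b c)) Rplus_comm Rplus_0_l.

(* Loading the reals rebinds the key %N; restore it to ssrnat's scope. *)
Delimit Scope nat_scope with N.
Local Open Scope R_scope.

Lemma rsumE (T : Type) (s : seq T) f : rsum s f = \big[Rplus/0]_(x <- s) f x.
Proof. elim: s => [|x s IH] /=; [by rewrite big_nil | by rewrite big_cons IH]. Qed.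

Lemma rsum_cons (T : Type) x (s : seq T) f : rsum (x :: s) f = f x + rsum s f.
Proof. by []. Qed.

Lemma rsum_cat (T : Type) (s1 s2 : seq T) f : rsum (s1 ++ s2) f = rsum s1 f + rsum s2 f.
Proof. by rewrite !rsumE big_cat. Qed.

Lemma rsum_map (T U : Type) (h : T -> U) (s : seq T) f :
  rsum (map h s) f = rsum s (fun x => f (h x)).
Proof. by rewrite !rsumE big_map. Qed.

Lemma rsum_perm (T : eqType) (s1 s2 : seq T) f : perm_eq s1 s2 -> rsum s1 f = rsum s2 f.
Proof. by move=> H; rewrite !rsumE; apply: perm_big. Qed.

Lemma rsum_ext (T : Type) (s : seq T) f g : (forall x, f x = g x) -> rsum s f = rsum s g.
Proof. by move=> H; elim: s => //= x s ->; rewrite H. Qed.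

Lemma rsum_ext_in (T : eqType) (s : seq T) f g :
  (forall x, x \in s -> f x = g x) -> rsum s f = rsum s g.
Proof. by move=> H; rewrite !rsumE; apply: eq_big_seq. Qed.

Lemma rsum_add (T : Type) (s : seq T) f g :
  rsum s (fun x => f x + g x) = rsum s f + rsum s g.
Proof. elim: s => /= [|x s ->]; lra. Qed.

Lemma rsum_scale (T : Type) (s : seq T) f c : rsum s (fun x => c * f x) = c * rsum s f.
Proof. elim: s => /= [|x s ->]; lra. Qed.

Lemma rsum_scaler (T : Type) (s : seq T) f c : rsum s (fun x => f x * c) = rsum s f * c.
Proof. elim: s => /= [|x s ->]; lra. Qed.

Lemma rsum_opp (T : Type) (s : seq T) f : rsum s (fun x => - f x) = - rsum s f.
Proof. elim: s => /= [|x s ->]; lra. Qed.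

Lemma rsum_const (T : Type) (s : seq T) c : rsum s (fun _ => c) = INR (size s) * c.
Proof.
elim: s => [|x s IH]; first by rewrite /=; lra.
change (c + rsum s (fun _ => c) = INR (size s).+1 * c).
by rewrite IH S_INR; lra.
Qed.

Lemma rsum_const0 (T : Type) (s : seq T) : rsum s (fun _ => 0) = 0.
Proof. by rewrite rsum_const Rmult_0_r. Qed.

Lemma rsum_ge0 (T : Type) (s : seq T) f : (forall x, 0 <= f x) -> 0 <= rsum s f.
Proof. move=> H; elim: s => /= [|x s IH]; [lra | have := H x; lra]. Qed.

Lemma rsum_le (T : Type) (s : seq T) f g : (forall x, f x <= g x) -> rsum s f <= rsum s g.
Proof. move=> H; elim: s => /= [|x s IH]; [lra | have := H x; lra]. Qed.

Lemma rsum_abs (T : Type) (s : seq T) f : Rabs (rsum s f) <= rsum s (fun x => Rabs (f x)).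
Proof.
elim: s => /= [|x s IH]; first by rewrite Rabs_R0; lra.
have := Rabs_triang (f x) (rsum s f); lra.
Qed.

Lemma rsum_term (T : eqType) (s : seq T) f x :
  (forall y, 0 <= f y) -> x \in s -> f x <= rsum s f.
Proof.
move=> H; elim: s => //= y s IH; rewrite in_cons => /orP [/eqP -> | Hx].
  by have := rsum_ge0 s H; lra.
by have := IH Hx; have := H y; lra.
Qed.

Lemma rsum_eq0_ge0 (T : eqType) (s : seq T) f :
  (forall x, 0 <= f x) -> rsum s f = 0 -> forall x, x \in s -> f x = 0.
Proof.
move=> H Hs x Hx; have := rsum_term H Hx; have := H x.
have := rsum_ge0 (rem x s) H.
rewrite (rsum_perm f (perm_to_rem Hx)) /= in Hs; lra.
Qed.

Lemma rsum_swap (T U : Type) (s : seq T) (t : seq U) (F : T -> U -> R) :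
  rsum s (fun x => rsum t (F x)) = rsum t (fun y => rsum s (fun x => F x y)).
Proof.
rewrite rsumE (eq_bigr (fun x => \big[Rplus/0]_(y <- t) F x y)); last by move=> x _; rewrite rsumE.
by rewrite exchange_big rsumE; apply: eq_bigr => y _; rewrite rsumE.
Qed.

Lemma rsum_flatten (T : Type) (ss : seq (seq T)) f :
  rsum (flatten ss) f = rsum ss (fun s => rsum s f).
Proof. by elim: ss => //= s ss IH; rewrite rsum_cat IH. Qed.

Lemma rsum_filter (T : Type) (s : seq T) (P : pred T) f :
  rsum (filter P s) f = rsum s (fun x => if P x then f x else 0).
Proof. elim: s => //= x s IH; case: (P x) => /=; rewrite IH; lra. Qed.

Lemma rsum_pick (T : eqType) (s : seq T) (e : T) (f : T -> R) : uniq s -> e \in s ->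
  rsum s (fun c => if c == e then f c else 0) = f e.
Proof.
move=> hu he; rewrite -(rsum_ext _ (f := fun c => if pred1 e c then f c else 0)) //.
by rewrite -rsum_filter filter_pred1_uniq //= Rplus_0_r.
Qed.

Lemma rsum_partition (A B : eqType) (s : seq A) (h : A -> B) (f : A -> R) :
  rsum s f = rsum (undup (map h s)) (fun b => rsum s (fun t => if h t == b then f t else 0)).
Proof.
rewrite rsum_swap; apply: rsum_ext_in => t ht.
rewrite (rsum_ext _ (g := fun b => if b == h t then f t else 0)); last by move=> b; rewrite eq_sym.
by rewrite rsum_pick ?undup_uniq // mem_undup map_f.
Qed.

Lemma rprod_cat (T : Type) (s1 s2 : seq T) f : rprod (s1 ++ s2) f = rprod s1 f * rprod s2 f.
Proof. elim: s1 => /= [|x s IH]; [ring | rewrite IH; ring]. Qed.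

Lemma rprod_ext_in (T : eqType) (s : seq T) f g :
  (forall x, x \in s -> f x = g x) -> rprod s f = rprod s g.
Proof.
elim: s => //= x s IH H; rewrite H ?mem_head // IH // => y Hy.
by apply: H; rewrite in_cons Hy orbT.
Qed.

Lemma sum_f_rsum (f : nat -> R) N : sum_f_R0 f N = rsum (iota 0 N.+1) f.
Proof.
elim: N => [|N IH]; first by rewrite /= Rplus_0_r.
change (sum_f_R0 f N + f N.+1 = rsum (iota 0 N.+2) f).
by rewrite IH -(addn1 N.+1) iotaD rsum_cat /= Rplus_0_r.
Qed.

Lemma series_terms_cv0 (f : nat -> R) l : infinite_sum f l -> Un_cv f 0.
Proof.
move=> H eps he; have [N HN] := H (eps / 2) ltac:(lra).
exists N.+1 => -[|n] hn; first lia.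
have h1 := HN n ltac:(lia); have h2 := HN n.+1 ltac:(lia).
rewrite /R_dist /= in h1 h2 *; rewrite Rminus_0_r.
have := Rabs_triang (sum_f_R0 f n + f n.+1 - l) (- (sum_f_R0 f n - l)).
rewrite Rabs_Ropp; have -> : sum_f_R0 f n + f n.+1 - l + - (sum_f_R0 f n - l) = f n.+1 by ring.
lra.
Qed.

Lemma cv0_squeeze (u v w : nat -> R) k : 0 <= k ->
  (forall n, 0 <= u n <= v n + k * w n) -> Un_cv v 0 -> Un_cv w 0 -> Un_cv u 0.
Proof.
move=> hk hu hv hw eps he.
have [N1 H1] := hv (eps / 2) ltac:(lra).
have [N2 H2] := hw (eps / (2 * (k + 1))) ltac:(apply: Rdiv_lt_0_compat; lra).
exists (Nat.max N1 N2) => n hn; have [hu0 hu1] := hu n.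
have := H1 n ltac:(lia); have := H2 n ltac:(lia); rewrite /R_dist !Rminus_0_r => hw' hv'.
have hkw : k * w n <= (k + 1) * (eps / (2 * (k + 1))).
  apply: Rle_trans (Rmult_le_compat_l _ _ _ hk (Rle_abs (w n))) _.
  by apply: Rmult_le_compat; try lra; apply: Rabs_pos.
rewrite (_ : (k + 1) * (eps / (2 * (k + 1))) = eps / 2) in hkw; last by field; lra.
rewrite Rabs_pos_eq //; have := Rle_abs (v n); lra.
Qed.

Lemma infinite_sum_scale (f : nat -> R) l k :
  infinite_sum f l -> infinite_sum (fun n => k * f n) (k * l).
Proof.
move=> H; have hk : Un_cv (fun _ => k) k.
  by move=> e he; exists O => n _; rewrite /R_dist Rminus_diag Rabs_R0.
have := CV_mult _ _ _ _ hk H; rewrite /infinite_sum => HM e he.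
have [N HN] := HM e he; exists N => n hn.
suff -> : sum_f_R0 (fun n => k * f n) n = k * sum_f_R0 f n by exact: HN.
by elim: n {hn} => /= [|n ->]; ring.
Qed.

(* [field] and [lra] treat [INR n] as an atom once it is named. *)
Ltac name_INR := repeat match goal with |- context [INR ?n] =>
  let x := fresh "r" in set x := INR n end.

Lemma INR_ne0 n : (0 < n)%N -> INR n <> 0.
Proof. by move=> h; apply: not_0_INR; lia. Qed.

(* The algebraic identity behind one step of the telescoping in
   [insert_outflow_eq]. *)
Lemma telescope_step (a V0 W0 V1 W1 Q Q' G : R) : V0 <> 0 -> V1 <> 0 -> W1 <> 0 ->
  G * V1 = a * (V1 * Q - W1 * Q') ->
  (a / V0 * (a / V1 * Q') * (V0 - W0) + a / W1 * G) * V0 =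
  a * (V0 * (a / W1 * Q) - W0 * (a / V1 * Q')).
Proof.
move=> h0 h1 h2 HG.
have -> : G = a * (V1 * Q - W1 * Q') / V1 by rewrite -HG; field.
by field.
Qed.

Lemma incr_last_rcons (A : Type) (y : seq (A * nat)) e k :
  incr_last (rcons y (e, k)) = rcons y (e, k.+1).
Proof. by elim: y => [|[c n] y IH] //=; rewrite IH; case: y IH. Qed.

Lemma map_fst_incr_last (A : Type) (y : seq (A * nat)) : map fst (incr_last y) = map fst y.
Proof. by case/lastP: y => [|y [e k]] //; rewrite incr_last_rcons !map_rcons. Qed.

Section Model.
Variables (K d : nat) (lam mu : R).
Hypotheses (hd : (0 < d)%N) (hdK : (d <= K)%N) (hlam : 0 < lam) (hmu : 0 < mu).
Notation T := (ctype K d).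

Lemma card_ctype : #|T| = 'C(K, d).
Proof.
rewrite /ctype card_sig; have := card_draws ('I_K) d; rewrite card_ord => <-.
by apply: eq_card => S; rewrite !inE.
Qed.

Lemma size_enumT : size (enum T) = 'C(K, d).
Proof. by rewrite -cardE card_ctype. Qed.

Lemma INR_binom_pos : 0 < INR 'C(K, d).
Proof. by apply: lt_0_INR; apply/ltP; rewrite bin_gt0. Qed.

Lemma card_ctype_set (c : T) : #|val c| = d.
Proof. by case: c => S /= /eqP. Qed.

Lemma card_setU_gt0 (A : {set 'I_K}) (c : T) : (0 < #|A :|: val c|)%N.
Proof.
apply: leq_trans (subset_leq_card (subsetUr A (val c))).
by rewrite card_ctype_set.
Qed.

Lemma INR_card_setU_ne0 (A : {set 'I_K}) (c : T) : INR #|A :|: val c| <> 0.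
Proof. exact/INR_ne0/card_setU_gt0. Qed.

Lemma INR_card_setD (A : {set 'I_K}) (c : T) :
  INR #|val c :\: A| = INR #|A :|: val c| - INR #|A|.
Proof.
have h1 := cardsID A (val c); have h2 := cardsUI A (val c).
rewrite setIC in h1; have -> : #|A :|: val c| = (#|A| + #|val c :\: A|)%N by lia.
rewrite plus_INR; lra.
Qed.

Lemma servers_nil : servers ([::] : seq T) = set0.
Proof. by rewrite /servers big_nil. Qed.

Lemma servers_rcons (s : seq T) c : servers (rcons s c) = servers s :|: val c.
Proof. by rewrite /servers -cats1 big_cat big_seq1. Qed.

Lemma sub_servers (s : seq T) c : c \in s -> val c \subset servers s.
Proof. by move=> hc; rewrite /servers (big_rem c hc) subsetUl. Qed.

Lemma dep_total_servers (pre x : seq T) :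
  dep_total_aux mu pre x + mu * INR #|servers pre| = mu * INR #|servers (pre ++ x)|.
Proof.
elim: x pre => [|c x IH] pre /=; first by rewrite cats0; lra.
have H := INR_card_setD (servers pre) c; rewrite -servers_rcons in H.
rewrite /dep_rate -cat_rcons -IH H; set D := dep_total_aux _ _ _; name_INR; ring.
Qed.

Lemma dep_total0 (x : seq T) : dep_total_aux mu [::] x = mu * INR #|servers x|.
Proof. by have := dep_total_servers [::] x; rewrite servers_nil cards0 /=; lra. Qed.

Lemma dep_rate_ge0 pre (c : T) : 0 <= dep_rate mu pre c.
Proof. by rewrite /dep_rate; have := pos_INR #|val c :\: servers pre|; nra. Qed.

Lemma out_rate_ge0 (y : seq T) : 0 <= out_rate lam mu y.
Proof. by rewrite /out_rate dep_total0; have := pos_INR #|servers y|; nra. Qed.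

Definition a := lam / (mu * INR 'C(K, d)).

Lemma a_pos : 0 < a.
Proof. by apply: Rdiv_lt_0_compat => //; have := INR_binom_pos; nra. Qed.

(* Product-form weight of the word x behind customers already occupying
   the servers S: prod_k a / |S u servers(c_1 ... c_k)|. *)
Fixpoint prodform (S : {set 'I_K}) (x : seq T) : R :=
  match x with
  | [::] => 1
  | c :: y => a / INR #|S :|: val c| * prodform (S :|: val c) y
  end.

Definition q x := prodform set0 x.

Lemma prodform_pos S x : 0 < prodform S x.
Proof.
elim: x S => /= [|c x IH] S; first lra.
apply: Rmult_lt_0_compat; last exact: IH.
by apply: Rdiv_lt_0_compat; [exact: a_pos | apply: lt_0_INR; apply/ltP; exact: card_setU_gt0].
Qed.

Lemma prodform_rcons S x c :
  prodform S (rcons x c) = prodform S x * (a / INR #|S :|: servers (rcons x c)|).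
Proof.
elim: x S => [|b x IH] S /=.
  by rewrite /servers big_seq1 Rmult_1_r Rmult_1_l.
rewrite IH Rmult_assoc; do 3 f_equal.
by rewrite /servers /= !big_cons setUA.
Qed.

Definition ins k (c : T) (y : seq T) := take k y ++ c :: drop k y.

(* Weighted rate (in units of mu) at which the words obtained by inserting
   c into x leave towards x by the departure of the inserted customer. *)
Definition insert_outflow (S : {set 'I_K}) (x : seq T) (c : T) : R :=
  rsum (iota 0 (size x).+1) (fun k =>
    prodform S (ins k c x) * INR #|val c :\: (S :|: servers (take k x))|).

Lemma insert_outflow_eq S x c :
  insert_outflow S x c * INR #|S :|: val c| =
  a * (INR #|S :|: val c| * prodform S x - INR #|S| * prodform (S :|: val c) x).
Proof.
elim: x S => [|b y IH] S.
  rewrite /insert_outflow /ins /= servers_nil setU0 INR_card_setD.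
  have := @INR_card_setU_ne0 S c; name_INR => hc; by field.
rewrite /insert_outflow.
change (iota 0 (size (b :: y)).+1) with (0%N :: iota 1 (size y).+1).
rewrite [iota 1 _](iotaDl 1 0) rsum_cons rsum_map /ins take0 drop0 servers_nil setU0.
have -> : rsum (iota 0 (size y).+1) (fun k => prodform S (take (1 + k) (b :: y) ++
      c :: drop (1 + k) (b :: y)) * INR #|val c :\: (S :|: servers (take (1 + k) (b :: y)))|) =
    a / INR #|S :|: val b| * insert_outflow (S :|: val b) y c.
  rewrite /insert_outflow -rsum_scale; apply: rsum_ext => k.
  by rewrite add1n /= /servers big_cons setUA Rmult_assoc.
rewrite /= -!setUA [val c :|: val b]setUC !setUA INR_card_setD.
by apply: telescope_step (IH _); apply: INR_card_setU_ne0.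
Qed.

Lemma insert_outflow0 x c : insert_outflow set0 x c = a * q x.
Proof.
have := insert_outflow_eq set0 x c; rewrite cards0 /= set0U /q.
have := @INR_card_setU_ne0 set0 c; rewrite set0U => hc h.
by apply: (Rmult_eq_reg_r _ _ _ _ hc); rewrite h; name_INR; ring.
Qed.

Definition arrival_in (g : seq T -> R) (y : seq T) :=
  if rev y is c :: ry then g (rev ry) * (lam / INR 'C(K, d)) else 0.

Definition departure_in (g : seq T -> R) (y : seq T) :=
  rsum (iota 0 (size y).+1) (fun k =>
    rsum (enum T) (fun c => g (ins k c y) * dep_rate mu (take k y) c)).

Lemma in_rate_split g y : in_rate lam mu g y = arrival_in g y + departure_in g y.
Proof. by []. Qed.

Lemma q_balance x : q x * out_rate lam mu x = in_rate lam mu q x.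
Proof.
rewrite in_rate_split /out_rate.
have -> : departure_in q x = rsum (enum T) (fun c => mu * insert_outflow set0 x c).
  rewrite /departure_in rsum_swap; apply: rsum_ext => c; rewrite -rsum_scale.
  by apply: rsum_ext => k; rewrite /dep_rate set0U /q; name_INR; ring.
rewrite (rsum_ext _ (g := fun _ => mu * (a * q x))); last by move=> c; rewrite insert_outflow0.
rewrite rsum_const size_enumT dep_total0 /arrival_in.
have hC := INR_binom_pos.
case/lastP: x => [|y c].
  by rewrite /q /= servers_nil cards0 /a /=; field; lra.
rewrite rev_rcons revK /q prodform_rcons set0U /a.
have := @INR_card_setU_ne0 (servers y) c; rewrite -servers_rcons.
by move: hC; name_INR => hC hs; field; lra.
Qed.

Fixpoint words (n : nat) : seq (seq T) :=
  if n is n'.+1 then [seq rcons t c | t <- words n', c <- enum T] else [:: [::]].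

Lemma mem_words n s : (s \in words n) = (size s == n).
Proof.
elim: n s => [|n IH] s /=; first by case: s.
apply/allpairsP/idP => [[[t c] /= [Ht _ ->]] | Hs].
  by rewrite size_rcons; move: Ht; rewrite IH => /eqP ->.
move: Hs; case/lastP: s => [|t c] //; rewrite size_rcons eqSS => Ht.
by exists (t, c); rewrite /= IH Ht mem_enum.
Qed.

Lemma uniq_words n : uniq (words n).
Proof.
elim: n => [|n IH] //=; apply: allpairs_uniq => //; first exact: enum_uniq.
by move=> [t1 c1] [t2 c2] _ _ /= /rcons_inj [-> ->].
Qed.

Lemma rsum_wordsS n f : rsum (words n.+1) f =
  rsum (words n) (fun t => rsum (enum T) (fun c => f (rcons t c))).
Proof. by rewrite /= !rsumE big_allpairs_dep; apply: eq_bigr => t _; rewrite rsumE. Qed.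

Lemma rsum_tuples (f : seq T -> R) n :
  rsum (enum ((n.-tuple T) : finType)) (fun t => f (val t)) = rsum (words n) f.
Proof.
rewrite -(rsum_map val _ f); apply/rsum_perm/uniq_perm.
- by rewrite (map_inj_uniq val_inj) enum_uniq.
- exact: uniq_words.
move=> s; rewrite mem_words; apply/mapP/idP => [[t _ ->] | Hs].
  by rewrite size_tuple.
by exists (Tuple Hs); rewrite ?mem_enum.
Qed.

Lemma mass_words (p : seq T -> R) n : mass p n = rsum (words n) p.
Proof. exact: rsum_tuples. Qed.

Lemma size_ins k c y : size (ins k c y) = (size y).+1.
Proof. by rewrite /ins size_cat /= size_take size_drop; case: ltnP; lia. Qed.

Lemma take_ins k c y : (k <= size y)%N -> take k (ins k c y) = take k y.
Proof. by move=> h; rewrite /ins take_size_cat // size_takel. Qed.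

Lemma drop_ins k c y : (k <= size y)%N -> drop k (ins k c y) = c :: drop k y.
Proof. by move=> h; rewrite /ins drop_size_cat // size_takel. Qed.

Lemma ins_perm n k : (k <= n)%N ->
  perm_eq [seq ins k c y | y <- words n, c <- enum T] (words n.+1).
Proof.
move=> hk; apply: uniq_perm; last 1 first.
- move=> z; rewrite mem_words; apply/allpairsP/idP => [[[y c] /= [Hy _ ->]] | /eqP Hz].
    by rewrite size_ins; move: Hy; rewrite mem_words.
  have hkz : (k < size z)%N by rewrite Hz.
  case E: (drop k z) => [|c rest].
    by move: (f_equal size E) hkz; rewrite size_drop /=; move: (size z) => sz; lia.
  exists (take k z ++ rest, c); rewrite /= mem_words mem_enum; split => //.
    move: (f_equal size E); rewrite size_cat size_drop (size_takel (ltnW hkz)) /=.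
    by rewrite Hz; move: (size rest) => sr; lia.
  by rewrite /ins take_size_cat ?drop_size_cat ?(size_takel (ltnW hkz)) // -E cat_take_drop.
- apply: allpairs_uniq; [exact: uniq_words | exact: enum_uniq |].
  move=> [y1 c1] [y2 c2] /allpairsP [[y1' c1'] /= [H1 _ [-> ->]]].
  move=> /allpairsP [[y2' c2'] /= [H2 _ [-> ->]]] /= E.
  move: H1 H2; rewrite !mem_words => /eqP s1 /eqP s2.
  have hk1 : (k <= size y1')%N by rewrite s1.
  have hk2 : (k <= size y2')%N by rewrite s2.
  have Et : take k y1' = take k y2' by rewrite -(take_ins c1' hk1) -(take_ins c2' hk2) E.
  have [-> Ed] : c1' :: drop k y1' = c2' :: drop k y2'.
    by rewrite -(drop_ins c1' hk1) -(drop_ins c2' hk2) E.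
  by rewrite -(cat_take_drop k y1') -(cat_take_drop k y2') Et Ed.
- exact: uniq_words.
Qed.

Lemma dep_total_sum (pre z : seq T) : dep_total_aux mu pre z =
  rsum (iota 0 (size z)) (fun k =>
    if drop k z is c :: _ then dep_rate mu (pre ++ take k z) c else 0).
Proof.
elim: z pre => [|c z IH] pre //=.
rewrite [iota 1 _](iotaDl 1 0) rsum_map cats0 IH; congr (_ + _).
by apply: rsum_ext => k; rewrite add1n /= cat_rcons.
Qed.

Definition level_mass (g : seq T -> R) n := rsum (words n) g.
Definition level_dep (g : seq T -> R) n :=
  rsum (words n) (fun z => g z * dep_total_aux mu [::] z).

Lemma departure_flux (g : seq T -> R) n :
  rsum (words n) (departure_in g) = level_dep g n.+1.
Proof.
pose h k z := if drop k z is c :: _ then g z * dep_rate mu (take k z) c else 0.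
transitivity (rsum (iota 0 n.+1) (fun k => rsum (words n.+1) (h k))).
  rewrite (rsum_ext_in (g := fun y => rsum (iota 0 n.+1) (fun k => rsum (enum T) (fun c =>
     g (ins k c y) * dep_rate mu (take k y) c)))); last first.
    by move=> y; rewrite mem_words /departure_in => /eqP ->.
  rewrite rsum_swap; apply: rsum_ext_in => k; rewrite mem_iota add0n => /andP [_ hk].
  rewrite -(rsum_perm _ (@ins_perm n k hk)) !rsumE big_allpairs_dep; apply: eq_big_seq => y.
  rewrite mem_words => /eqP hy; rewrite rsumE; apply: eq_bigr => c _.
  by rewrite /h drop_ins ?take_ins ?hy.
rewrite -rsum_swap /level_dep; apply: rsum_ext_in => z; rewrite mem_words => /eqP hz.
rewrite dep_total_sum -rsum_scale hz; apply: rsum_ext => k; rewrite /h.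
by case: (drop k z) => [|c r]; [ring | rewrite cat0s].
Qed.

Lemma arrival_flux (g : seq T -> R) n :
  rsum (words n) (arrival_in g) = if n is n'.+1 then lam * level_mass g n' else 0.
Proof.
case: n => [|n]; first by rewrite /= /arrival_in Rplus_0_r.
rewrite rsum_wordsS /arrival_in /level_mass -rsum_scale; apply: rsum_ext => t.
under rsum_ext => c do rewrite rev_rcons revK.
rewrite rsum_const size_enumT.
by have := INR_binom_pos; name_INR => hC; field; lra.
Qed.

Lemma level_out_rate (g : seq T -> R) n :
  rsum (words n) (fun y => g y * out_rate lam mu y) = lam * level_mass g n + level_dep g n.
Proof.
rewrite /out_rate /level_mass /level_dep -rsum_scale -rsum_add.
by apply: rsum_ext => y; ring.
Qed.

Lemma level_in_rate (g : seq T -> R) n :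
  rsum (words n) (in_rate lam mu g) =
  (if n is n'.+1 then lam * level_mass g n' else 0) + level_dep g n.+1.
Proof.
by rewrite (rsum_ext _ (in_rate_split g)) rsum_add arrival_flux departure_flux.
Qed.

Lemma level_dep_le (g : seq T -> R) n : (forall y, 0 <= g y) ->
  level_dep g n <= mu * INR K * level_mass g n.
Proof.
move=> hg; rewrite /level_dep /level_mass -rsum_scale; apply: rsum_le => z.
rewrite dep_total0.
have hK : INR #|servers z| <= INR K by apply/le_INR/leP; have := max_card (servers z); rewrite card_ord.
have hmg : 0 <= mu * g z by have := hg z; nra.
by move: hK hmg; name_INR; nra.
Qed.

Lemma arrival_in_ge0 (g : seq T -> R) y : (forall x, 0 <= g x) -> 0 <= arrival_in g y.
Proof.
move=> hg; have hl : 0 <= lam / INR 'C(K, d).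
  by apply/Rlt_le/Rdiv_lt_0_compat => //; exact: INR_binom_pos.
by rewrite /arrival_in; case: (rev y) => [|c r]; [lra | have := hg (rev r); nra].
Qed.

(* Among the inflows into y is the departure of a customer placed in front
   of y, who is served by all of its d servers. *)
Lemma in_rate_ge_front (g : seq T -> R) y c : (forall x, 0 <= g x) ->
  g (c :: y) * (mu * INR d) <= in_rate lam mu g y.
Proof.
move=> hg; rewrite in_rate_split.
have hnn k c' : 0 <= g (ins k c' y) * dep_rate mu (take k y) c'.
  by have := hg (ins k c' y); have := dep_rate_ge0 (take k y) c'; nra.
have h0 : g (c :: y) * (mu * INR d) <=
    rsum (enum T) (fun c' => g (ins 0 c' y) * dep_rate mu (take 0 y) c').
  have -> : g (c :: y) * (mu * INR d) = g (ins 0 c y) * dep_rate mu (take 0 y) c.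
    by rewrite /ins take0 drop0 /dep_rate servers_nil setD0 card_ctype_set.
  exact: rsum_term (hnn 0%N) (mem_enum _ _).
have h1 : rsum (enum T) (fun c' => g (ins 0 c' y) * dep_rate mu (take 0 y) c') <=
    departure_in g y.
  by apply: (rsum_term (fun k => rsum_ge0 _ (hnn k))); rewrite mem_iota.
by have := arrival_in_ge0 y hg; lra.
Qed.

Section Subsolution.
Variable g : seq T -> R.
Hypothesis g_ge0 : forall y, 0 <= g y.
Hypothesis g_sub : forall y, g y * out_rate lam mu y <= in_rate lam mu g y.
Hypothesis g_mass_cv0 : Un_cv (level_mass g) 0.
Hypothesis g_nil : g [::] = 0.

(* Net flux from level n up to level n+1. *)
Definition flux_gap n := lam * level_mass g n - level_dep g n.+1.

Lemma level_flux_le n :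
  rsum (words n) (fun y => g y * out_rate lam mu y) <= rsum (words n) (in_rate lam mu g).
Proof. exact: rsum_le. Qed.

(* The sub-solution inequality at level n+1 says the net flux is nonincreasing. *)
Lemma flux_gap_nonincr n m : (n <= m)%N -> flux_gap m <= flux_gap n.
Proof.
move=> /subnK <-; elim: (m - n)%N => [|j IH]; first by rewrite add0n; lra.
have := level_flux_le (j + n).+1.
by rewrite addSn level_out_rate level_in_rate /flux_gap in IH *; lra.
Qed.

(* The net flux starts nonpositive and is eventually above -mu K times a
   vanishing mass; being nonincreasing, it is identically 0. *)
Lemma flux_gap_eq0 n : flux_gap n = 0.
Proof.
have hdep0 : level_dep g 0 = 0 by rewrite /level_dep /= Rmult_0_r Rplus_0_r.
have hle : flux_gap n <= 0.
  have := flux_gap_nonincr (leq0n n); have := level_flux_le 0.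
  by rewrite level_out_rate level_in_rate hdep0 /flux_gap; lra.
apply: Rle_antisym => //; apply: Rnot_lt_le => hlt.
have hK : 0 < mu * INR K by apply: Rmult_lt_0_compat => //; apply/lt_0_INR/ltP; exact: leq_trans hdK.
have heps : - flux_gap n / (mu * INR K) > 0 by apply: Rdiv_lt_0_compat; lra.
have [N HN] := g_mass_cv0 heps.
pose m := maxn n N.
have hm := HN m.+1 ltac:(rewrite /m; lia); rewrite /R_dist Rminus_0_r in hm.
have h1 := flux_gap_nonincr (leq_maxl n N); rewrite -/m /flux_gap in h1.
have h2 := level_dep_le m.+1 g_ge0.
have h3 : 0 <= lam * level_mass g m by apply: Rmult_le_pos; [lra | exact: rsum_ge0].
have h4 : mu * INR K * level_mass g m.+1 < - flux_gap n.
  apply: Rle_lt_trans (Rmult_le_compat_l _ _ _ (Rlt_le _ _ hK) (Rle_abs _)) _.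
  have -> : - flux_gap n = mu * INR K * (- flux_gap n / (mu * INR K)).
    by rewrite Rmult_div_assoc Rmult_div_r //; lra.
  exact: Rmult_lt_compat_l.
by rewrite /flux_gap in h4; lra.
Qed.

Lemma subsolution_balanced y : g y * out_rate lam mu y = in_rate lam mu g y.
Proof.
pose n := size y.
have hsum : rsum (words n) (fun y => in_rate lam mu g y - g y * out_rate lam mu y) = 0.
  rewrite /Rminus rsum_add rsum_opp level_in_rate level_out_rate.
  case: n => [|n']; last by have := flux_gap_eq0 n'; have := flux_gap_eq0 n'.+1; rewrite /flux_gap; lra.
  by have := flux_gap_eq0 0; rewrite /flux_gap /level_dep /= Rmult_0_r Rplus_0_r; lra.
have hgap z : 0 <= in_rate lam mu g z - g z * out_rate lam mu z by have := g_sub z; lra.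
by have := rsum_eq0_ge0 hgap hsum (x := y); rewrite mem_words eqxx => /(_ isT); lra.
Qed.

(* The front customer of c :: y departs into y at rate mu d, so g (c :: y)
   is bounded by the inflow into y, which is g y * out_rate = 0 by induction. *)
Lemma subsolution_eq0 y : g y = 0.
Proof.
elim: y => [|c y IH] //.
have := in_rate_ge_front y c g_ge0; rewrite -subsolution_balanced IH Rmult_0_l.
have hd' : 0 < mu * INR d by apply: Rmult_lt_0_compat => //; apply/lt_0_INR/ltP.
by have := g_ge0 (c :: y); nra.
Qed.

End Subsolution.

Lemma in_rate_add (f1 f2 : seq T -> R) y :
  in_rate lam mu (fun x => f1 x + f2 x) y = in_rate lam mu f1 y + in_rate lam mu f2 y.
Proof.
rewrite !in_rate_split.
have -> : forall A B C D : R, A + B + (C + D) = (A + C) + (B + D) by move=> *; ring.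
congr (_ + _); first by rewrite /arrival_in; case: (rev y) => [|c r]; ring.
rewrite /departure_in -rsum_add; apply: rsum_ext => j.
by rewrite -rsum_add; apply: rsum_ext => c; ring.
Qed.

Lemma in_rate_scale (f : seq T -> R) k y :
  in_rate lam mu (fun x => k * f x) y = k * in_rate lam mu f y.
Proof.
rewrite !in_rate_split Rmult_plus_distr_l.
congr (_ + _); first by rewrite /arrival_in; case: (rev y) => [|c r]; ring.
rewrite /departure_in -rsum_scale; apply: rsum_ext => j.
by rewrite -rsum_scale; apply: rsum_ext => c; ring.
Qed.

Lemma in_rate_abs (f : seq T -> R) y :
  Rabs (in_rate lam mu f y) <= in_rate lam mu (fun x => Rabs (f x)) y.
Proof.
have hl : 0 <= lam / INR 'C(K, d) by apply/Rlt_le/Rdiv_lt_0_compat => //; exact: INR_binom_pos.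
rewrite !in_rate_split; apply: Rle_trans (Rabs_triang _ _) _; apply: Rplus_le_compat.
  rewrite /arrival_in; case: (rev y) => [|c r]; first by rewrite Rabs_R0; lra.
  by rewrite Rabs_mult (Rabs_pos_eq _ hl); lra.
apply: Rle_trans (rsum_abs _ _) _; apply: rsum_le => j.
apply: Rle_trans (rsum_abs _ _) _; apply: rsum_le => c.
by rewrite Rabs_mult (Rabs_pos_eq _ (dep_rate_ge0 _ _)); lra.
Qed.

Lemma stationary_prop_q (p : seq T -> R) : Un_cv (level_mass q) 0 ->
  stationary lam mu p -> forall y, p y = p [::] * q y.
Proof.
move=> hq_cv0 [hp0 [hsum hbal]].
pose g y := Rabs (p y + - p [::] * q y).
have hg0 y : 0 <= g y by apply: Rabs_pos.
have hsub y : g y * out_rate lam mu y <= in_rate lam mu g y.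
  apply: Rle_trans (in_rate_abs _ _); rewrite in_rate_add in_rate_scale -hbal -q_balance /g.
  have -> : p y * out_rate lam mu y + - p [::] * (q y * out_rate lam mu y) =
    (p y + - p [::] * q y) * out_rate lam mu y by ring.
  by rewrite Rabs_mult (Rabs_pos_eq _ (out_rate_ge0 y)); right.
have hcv : Un_cv (level_mass g) 0.
  apply: (cv0_squeeze (v := mass p) (w := level_mass q) (Rabs_pos (p [::]))) => //.
  - move=> n; split; first exact: rsum_ge0.
    rewrite mass_words /level_mass -rsum_scale -rsum_add; apply: rsum_le => y.
    apply: Rle_trans (Rabs_triang _ _) _; rewrite Rabs_mult Rabs_Ropp (Rabs_pos_eq (p y)) //.
    by rewrite (Rabs_pos_eq (q y)); [lra | exact/Rlt_le/prodform_pos].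
  - exact: series_terms_cv0 hsum.
have hnil : g [::] = 0 by rewrite /g /q /= Rmult_1_r Rplus_opp_r Rabs_R0.
move=> y; have := subsolution_eq0 hg0 hsub hcv hnil y; rewrite /g => h.
by case: (Req_dec (p y + - p [::] * q y) 0) => [|/Rabs_no_R0]; lra.
Qed.

Lemma rsum_count (s : seq T) (k : R) : uniq s ->
  rsum (enum T) (fun c => if c \in s then k else 0) = INR (size s) * k.
Proof.
move=> hu; rewrite -(rsum_ext _ (f := fun c => if (mem s) c then k else 0)) //.
rewrite -rsum_filter rsum_const; congr (INR _ * _).
apply/perm_size/uniq_perm => //; first by rewrite filter_uniq // enum_uniq.
by move=> c; rewrite mem_filter mem_enum andbT.
Qed.

Notation tokens x := (map fst x).

Lemma desc_rcons (t : seq T) c : desc (rcons t c) = desc_step (desc t) c.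
Proof. by rewrite /desc foldl_rcons. Qed.

Lemma desc_uniq (t : seq T) : uniq (tokens (desc t)).
Proof.
elim/last_ind: t => [|t c' IH] //; rewrite desc_rcons /desc_step.
case: ifP => h; first by rewrite map_fst_incr_last.
by rewrite map_rcons rcons_uniq h IH.
Qed.

Lemma desc_servers (t : seq T) : servers t = servers (tokens (desc t)).
Proof.
elim/last_ind: t => [|t c' IH] //; rewrite desc_rcons /desc_step servers_rcons IH.
case: ifP => h; first by rewrite map_fst_incr_last; apply/setUidPl; exact: sub_servers.
by rewrite map_rcons servers_rcons.
Qed.

Definition ncust (x : seq (T * nat)) := (size x + sumn (map snd x))%N.

Lemma ncust_desc (t : seq T) : ncust (desc t) = size t.
Proof.
elim/last_ind: t => [|t c' IH] //; rewrite desc_rcons /desc_step size_rcons -IH /ncust.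
case: ifP => h.
  have : desc t != [::] by apply/eqP => E; move: h; rewrite E.
  case/lastP: (desc t) => [|y [e k]] // _.
  by rewrite incr_last_rcons !map_rcons !sumn_rcons !size_rcons /=; lia.
by rewrite map_rcons sumn_rcons size_rcons /=; lia.
Qed.

Lemma desc_step_new (x' : seq (T * nat)) e (y : seq (T * nat)) c : e \notin tokens x' ->
  (desc_step y c == rcons x' (e, 0%N)) = (y == x') && (c == e).
Proof.
move=> he; rewrite /desc_step; case: ifP => h; last by rewrite eqseq_rcons xpair_eqE andbT.
have : y != [::] by apply/eqP => E; move: h; rewrite E.
case/lastP: y h => [|y [e' k]] // h _.
rewrite incr_last_rcons eqseq_rcons xpair_eqE /= !andbF.
by case: eqP => [E|] //=; case: eqP => [E'|] //=; move: he; rewrite -E -E' h.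
Qed.

Lemma desc_step_old (x' : seq (T * nat)) e m (y : seq (T * nat)) c :
  (desc_step y c == rcons x' (e, m.+1)) = (y == rcons x' (e, m)) && (c \in tokens y).
Proof.
rewrite /desc_step; case: ifP => h; last by rewrite eqseq_rcons xpair_eqE !andbF.
have : y != [::] by apply/eqP => E; move: h; rewrite E.
case/lastP: y h => [|y [e' k]] // h _.
by rewrite incr_last_rcons !eqseq_rcons !xpair_eqE eqSS andbT.
Qed.

Definition aggregate (x : seq (T * nat)) :=
  rsum (words (ncust x)) (fun t => if desc t == x then q t else 0).

(* Appending a customer who takes a new token multiplies the aggregate by
   a / F_i, as the servers of the word are those of the tokens. *)
Lemma aggregate_new (x' : seq (T * nat)) e : e \notin tokens x' ->
  aggregate (rcons x' (e, 0%N)) = aggregate x' * (a / INR #|servers (rcons (tokens x') e)|).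
Proof.
move=> he; rewrite /aggregate.
have -> : ncust (rcons x' (e, 0%N)) = (ncust x').+1.
  by rewrite /ncust size_rcons map_rcons sumn_rcons /=; lia.
rewrite rsum_wordsS -rsum_scaler; apply: rsum_ext => t.
under rsum_ext => c do rewrite desc_rcons desc_step_new //.
case: eqP => [Et | _] /=; last by rewrite rsum_const0; ring.
rewrite rsum_pick ?enum_uniq ?mem_enum // /q prodform_rcons set0U.
by rewrite servers_rcons desc_servers Et servers_rcons.
Qed.

(* Appending a non-holding customer: any of the i types holding a token may
   arrive, and it occupies no new server. *)
Lemma aggregate_old (x' : seq (T * nat)) e m : uniq (tokens (rcons x' (e, m))) ->
  aggregate (rcons x' (e, m.+1)) =
  aggregate (rcons x' (e, m)) * (INR (size x').+1 * a / INR #|servers (rcons (tokens x') e)|).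
Proof.
move=> hu; rewrite /aggregate.
have -> : ncust (rcons x' (e, m.+1)) = (ncust (rcons x' (e, m))).+1.
  by rewrite /ncust !size_rcons !map_rcons !sumn_rcons /=; lia.
rewrite rsum_wordsS -rsum_scaler; apply: rsum_ext => t.
under rsum_ext => c do rewrite desc_rcons desc_step_old.
case: eqP => [Et | _]; last by under rsum_ext => c do rewrite andFb; rewrite rsum_const0; ring.
rewrite (rsum_ext _ (g := fun c => if c \in tokens (rcons x' (e, m)) then
    q t * (a / INR #|servers (rcons (tokens x') e)|) else 0)); last first.
  move=> c; rewrite andTb Et; case: ifP => // hc.
  rewrite /q prodform_rcons set0U servers_rcons desc_servers Et.
  have -> : servers (tokens (rcons x' (e, m))) :|: val c = servers (tokens (rcons x' (e, m))).
    by apply/setUidPl; exact: sub_servers.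
  by rewrite map_rcons.
by rewrite rsum_count // map_rcons size_rcons size_map /Rdiv; name_INR; ring.
Qed.

Lemma tok_weight_rcons (x' : seq (T * nat)) e n :
  tok_weight lam mu (rcons x' (e, n)) = tok_weight lam mu x' *
   (INR (size x').+1 * lam / (mu * INR 'C(K, d) * INR #|servers (rcons (tokens x') e)|)) ^ n.+1
   / INR (size x').+1.
Proof.
rewrite /tok_weight size_rcons.
have -> : iota 1 (size x').+1 = iota 1 (size x') ++ [:: (size x').+1].
  by rewrite -[in LHS](addn1 (size x')) iotaD add1n.
rewrite rprod_cat.
rewrite (rprod_ext_in (g := fun j => (INR j * lam / (mu * INR 'C(K, d) * INR (Fj x' j)))
    ^ S (nth O (map snd x') (Nat.pred j)))); last first.
  move=> j; rewrite mem_iota => /andP [h1 h2].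
  rewrite /Fj map_rcons -cats1 takel_cat ?size_map; last lia.
  by rewrite map_rcons nth_rcons size_map (_ : (Nat.pred j < size x')%N); last lia.
have -> : forall f, rprod [:: (size x').+1] f = f (size x').+1 by move=> f; rewrite /rprod /= Rmult_1_r.
rewrite [Nat.pred _]/= {2}/Fj map_rcons take_oversize; last by rewrite size_rcons size_map.
rewrite map_rcons nth_rcons size_map ltnn eqxx factS mult_INR.
have h1 : INR (size x')`! <> 0 by apply: INR_ne0; exact: fact_gt0.
have h2 : INR (size x').+1 <> 0 by apply: INR_ne0.
move: h1 h2; set A := rprod _ _; set B := (_ / _) ^ _.
by move: (INR (size x')`!) (INR (size x').+1) => u v h1 h2; field.
Qed.

Lemma aggregation (x : seq (T * nat)) : uniq (tokens x) -> aggregate x = tok_weight lam mu x.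
Proof.
elim/last_ind: x => [|x' [e n] IH] hu.
  by rewrite /aggregate /tok_weight /= Rinv_1 /q /=; lra.
move: (hu); rewrite map_rcons rcons_uniq /= => /andP [he hu'].
rewrite tok_weight_rcons -IH //.
have hF := @INR_card_setU_ne0 (servers (tokens x')) e; rewrite -servers_rcons in hF.
have hS : INR (size x').+1 <> 0 by apply: INR_ne0.
have hC : INR 'C(K, d) <> 0 by have := INR_binom_pos; lra.
have hmu0 : mu <> 0 by lra.
elim: n hu => [|n IHn] hu.
  rewrite aggregate_new //; move: hF hS hC; rewrite /a.
  by move: (INR #|_|) (INR (size x').+1) (INR 'C(K, d)) => u v w hF hS hC; field.
have hun : uniq (tokens (rcons x' (e, n))) by move: hu; rewrite !map_rcons.
rewrite aggregate_old // IHn //.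
move: hF hS hC; rewrite /a.
by move: (INR #|_|) (INR (size x').+1) (INR 'C(K, d)) (aggregate x') => u v w z hF hS hC /=; field.
Qed.

Lemma level_mass_q (n : nat) :
  level_mass q n = rsum (undup (map (@desc K d) (words n))) (tok_weight lam mu).
Proof.
rewrite /level_mass (rsum_partition _ (@desc K d)); apply: rsum_ext_in => x.
rewrite mem_undup => /mapP [t ht ->].
rewrite -aggregation ?desc_uniq // /aggregate ncust_desc.
by move: ht; rewrite mem_words => /eqP ->; apply: rsum_ext => t'; rewrite eq_sym.
Qed.

Lemma uniq_token_levels (s : seq nat) : uniq s ->
  uniq (flatten [seq undup (map (@desc K d) (words n)) | n <- s]).
Proof.
elim: s => //= n s IH /andP [hn hu]; rewrite cat_uniq undup_uniq IH // andbT.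
apply/hasPn => x /flattenP [U /mapP [m hm ->] hx].
apply/negP; rewrite mem_undup => /mapP [t ht E].
move: hx; rewrite mem_undup => /mapP [t' ht' E'].
move: ht ht'; rewrite !mem_words => /eqP h1 /eqP h2.
have enm : n = m by rewrite -h1 -h2 -!ncust_desc -E -E'.
by move: hn; rewrite enm hm.
Qed.

Lemma q_normalisable : norm_finite K d lam mu ->
  exists S, 0 < S /\ infinite_sum (level_mass q) S.
Proof.
move=> [B HB].
have hgrow : Un_growing (sum_f_R0 (level_mass q)).
  move=> n /=; have : 0 <= level_mass q n.+1 by apply/rsum_ge0 => x; exact/Rlt_le/prodform_pos.
  lra.
have hub : has_ub (sum_f_R0 (level_mass q)).
  exists B => _ [N ->]; rewrite sum_f_rsum (rsum_ext _ level_mass_q).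
  rewrite -(rsum_map (fun n => undup (map (@desc K d) (words n))) _ (fun U => rsum U _)).
  rewrite -rsum_flatten; apply: HB; first exact/uniq_token_levels/iota_uniq.
  apply/allP => x /flattenP [U /mapP [m _ ->]]; rewrite mem_undup => /mapP [t _ ->].
  exact: desc_uniq.
have [S HS] := growing_cv _ hgrow hub.
exists S; split => //; have := growing_ineq _ S hgrow HS 0%N.
by rewrite /= /level_mass /= /q /=; lra.
Qed.

Lemma stationary_exists : norm_finite K d lam mu -> exists p : seq T -> R, stationary lam mu p.
Proof.
move=> /q_normalisable [S [hS hsum]].
exists (fun x => / S * q x); split; [|split].
- by move=> x; apply: Rmult_le_pos; [exact/Rlt_le/Rinv_0_lt_compat | exact/Rlt_le/prodform_pos].
- have := infinite_sum_scale (/ S) hsum; rewrite Rinv_l; last lra.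
  move=> H e he; have [N HN] := H e he; exists N => n hn.
  suff -> : sum_f_R0 (mass (fun x => / S * q x)) n =
      sum_f_R0 (fun m => / S * level_mass q m) n by exact: HN.
  by elim: n {hn} => /= [|n ->]; rewrite mass_words rsum_scale.
- by move=> x; rewrite in_rate_scale -q_balance Rmult_assoc.
Qed.

Lemma pi_tok_prop (p : seq T -> R) (c : R) (x : seq (T * nat)) :
  (forall y, p y = c * q y) -> uniq (tokens x) -> pi_tok p x = c * tok_weight lam mu x.
Proof.
move=> hpq hx; rewrite -aggregation // /aggregate -rsum_scale /pi_tok.
rewrite (rsum_tuples (fun s => if desc s == x then p s else 0)).
by apply: rsum_ext => t; case: ifP => _; [rewrite hpq | ring].
Qed.

Lemma pi_tok_nil (p : seq T -> R) : pi_tok p [::] = p [::].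
Proof. by rewrite /pi_tok (rsum_tuples (fun s => if desc s == [::] then p s else 0)) /= Rplus_0_r. Qed.

End Model.

Theorem mainTheorem10 (K d : nat) (lam mu : R)
  (hd : (0 < d)%N) (hdK : (d <= K)%N) (hlam : (0 < lam)%R) (hmu : (0 < mu)%R)
  (hfin : @norm_finite K d lam mu) :
  (exists p, @stationary K d lam mu p) /\
  (forall p, @stationary K d lam mu p ->
   forall x : seq (ctype K d * nat), uniq (map fst x) ->
   pi_tok p x = (pi_tok p [::] * @tok_weight K d lam mu x)%R).
Proof.
split; first exact: stationary_exists hd hdK hlam hmu hfin.
move=> p hp x hx.
have [S [_ hsum]] := q_normalisable hd hdK hlam hmu hfin.
have hpq := stationary_prop_q hd hdK hlam hmu (series_terms_cv0 hsum) hp.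
by rewrite pi_tok_nil (pi_tok_prop hd hdK hmu hpq).
Qed.
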